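(* Let $F_j$ denote the ordinary Fibonacci numbers ($F_1=F_2=1$, $F_{j+1}=F_j+F_{j-1}$). For integers $m\ge1$ and $N\ge1$ let $$S_m(N)=\sum_{\substack{j_1,\dots,j_m\ge1\\ j_1+\cdots+j_m=N}}F_{j_1}F_{j_2}\cdots F_{j_m}.$$ Then for all integers $m\ge1$, $n\ge0$, $$S_m(n+m)=(-i)^nC_n^{m}(i/2)=\frac{(2m)_n}{2^n}\sum_{r=0}^{\lfloor n/2\rfloor}\frac{(5/4)^r}{r!\,(m+1/2)_r\,(n-2r)!}.$$ *)

From HB Require Import structures.
From mathcomp Require Import all_boot all_order all_algebra all_field.
Set Implicit Arguments. Unset Strict Implicit. Unset Printing Implicit Defensive.
Import Order.TTheory GRing.Theory Num.Theory.

Fixpoint fib (n : nat) : nat :=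
  match n with
  | 0 => 0
  | 1 => 1
  | (k.+1 as p).+1 => fib p + fib k
  end.

Definition Sfib (m N : nat) : nat :=
  \sum_(f : {ffun 'I_m -> 'I_N.+1} |
          [forall i, 0 < val (f i)] && (\sum_(i < m) val (f i) == N))
     \prod_(i < m) fib (f i).

Local Open Scope ring_scope.

Definition rising (a : algC) (n : nat) : algC := \prod_(k < n) (a + k%:R).

(* Gegenbauer polynomials C_n^l(x), via the standard three-term recurrence
   C_0 = 1, C_1 = 2 l x,
   n C_n = 2 x (n + l - 1) C_{n-1} - (n + 2 l - 2) C_{n-2}.
   gegen_pair l x n = (C_n^l(x), C_{n+1}^l(x)). *)
Fixpoint gegen_pair (l x : algC) (n : nat) : algC * algC :=
  match n with
  | 0 => (1, 2 * l * x)
  | k.+1 => let: (a, b) := gegen_pair l x k in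
            (b, (2 * x * (k.+1%:R + l) * b - (k%:R + 2 * l) * a) / k.+2%:R)
  end.

Definition gegenbauer (n : nat) (l x : algC) : algC := (gegen_pair l x n).1.

(* All three expressions satisfy, as sequences in n, the recurrence
     (n+2) u(n+2) = (n+1+m) u(n+1) + (n+2m) u(n),   u(0) = 1,  u(1) = m,
   so they coincide.  For the Fibonacci convolutions, S_m(n+m) is the n-th
   coefficient of Q^m with Q = sum F_(j+1) X^j = 1/(1 - X - X^2); differentiating
   (1 - X - X^2) Q = 1 gives (1 - X - X^2) (Q^m)' = m (1 + 2X) Q^m, whose
   coefficients are the recurrence.  Since Q is a power series, all of this is done
   with truncated polynomials.  For the Gegenbauer side the recurrence is the
   three-term recurrence of C_n^m at x = i/2.  For the hypergeometric sum it
   follows by creative telescoping: the summand satisfies the recurrence up to the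
   difference of the certificate [gegen_cert] at r+1 and r. *)

From HB Require Import structures.
From mathcomp Require Import all_boot all_order all_algebra all_field.
From mathcomp Require Import ring zify.
Import Order.TTheory GRing.Theory Num.Theory.
Local Open Scope ring_scope.

Section Truncation.
Context {R : comNzRingType}.
Implicit Types p q r : {poly R}.

Lemma take_polyMl K p q : take_poly K (p * q) = take_poly K (take_poly K p * q).
Proof.
apply/polyP => j; rewrite !coef_take_poly; case: ifP => // ltjK.
rewrite !coefM; apply: eq_bigr => i _; rewrite coef_take_poly ifT //.
by have := ltn_ord i; lia.
Qed.

Lemma take_polyMr K p q : take_poly K (p * q) = take_poly K (p * take_poly K q).
Proof. by rewrite [p * q]mulrC (take_polyMl K q p) [in RHS]mulrC. Qed.

Lemma eq_take_polyM {K} r {p q} :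
  take_poly K p = take_poly K q -> take_poly K (p * r) = take_poly K (q * r).
Proof. by move=> epq; rewrite take_polyMl epq -take_polyMl. Qed.

Lemma eq_take_polyX {K} m {p q} :
  take_poly K p = take_poly K q -> take_poly K (p ^+ m) = take_poly K (q ^+ m).
Proof.
move=> epq; elim: m => [|m IH]; first by rewrite !expr0.
by rewrite !exprS (eq_take_polyM (p ^+ m) epq) [in LHS]take_polyMr IH -take_polyMr.
Qed.

Lemma eq_take_poly_deriv {K p q} :
  take_poly K.+1 p = take_poly K.+1 q -> take_poly K p^`() = take_poly K q^`().
Proof.
move=> epq; apply/polyP => j; rewrite !coef_take_poly !coef_deriv.
case: ifP => // ltjK; move/polyP/(_ j.+1): epq.
by rewrite !coef_take_poly ltnS ltjK => ->.
Qed.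

End Truncation.

Section GegenbauerRecurrence.
Context {F : numFieldType}.

Definition gegen_recurrence (M : F) (u : nat -> F) :=
  forall n, n.+2%:R * u n.+2 = (n.+1%:R + M) * u n.+1 + (n%:R + 2 * M) * u n.

Lemma eq_gegen_recurrence {M u v} :
  gegen_recurrence M u -> gegen_recurrence M v ->
  u 0%N = v 0%N -> u 1%N = v 1%N -> u =1 v.
Proof.
move=> recu recv eq0 eq1.
suff eq2 n : u n = v n /\ u n.+1 = v n.+1 by move=> n; case: (eq2 n).
elim: n => [|n [eqn eqSn]] //; split=> //.
by apply: (mulfI (_ : n.+2%:R != 0)); rewrite ?pnatr_eq0 // recu recv eqn eqSn.
Qed.

End GegenbauerRecurrence.

Lemma fibSS n : fib n.+2 = (fib n.+1 + fib n)%N.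
Proof. by []. Qed.

Section FibonacciGeneratingFunction.
Context {R : comNzRingType}.

Definition fib_poly (K : nat) : {poly R} := \poly_(i < K) (fib i.+1)%:R.

Definition fib_den : {poly R} := 1 - 'X - 'X ^+ 2.

Lemma Sfib_coef m N :
  (Sfib m N)%:R = ((\sum_(j < N.+1) (fib j)%:R *: ('X^j : {poly R})) ^+ m)`_N.
Proof.
rewrite -[in RHS](card_ord m) -prodr_const bigA_distr_bigA /=.
under eq_bigr do rewrite scaler_prod prodrXr.
rewrite coef_sumMXn /Sfib natr_sum.
rewrite [RHS](bigID (fun f : {ffun 'I_m -> 'I_N.+1} => [forall i, 0 < val (f i)]%N)) /=.
rewrite [X in _ + X]big1 ?addr0; last first.
  move=> f /andP[_ /forallPn [i]]; rewrite lt0n negbK => /eqP fi.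
  by rewrite (bigD1 i) //= fi mul0r.
by apply: eq_big => [f|f _]; [exact: andbC | exact: natr_prod].
Qed.

Lemma sum_fibXn N :
  \sum_(j < N.+1) (fib j)%:R *: ('X^j : {poly R}) = 'X * fib_poly N.
Proof.
rewrite /fib_poly poly_def big_ord_recl /= scale0r add0r mulr_sumr.
by apply: eq_bigr => i _; rewrite exprS scalerAr.
Qed.

Lemma take_fib_poly j K : (j <= K)%N -> take_poly j (fib_poly K) = fib_poly j.
Proof.
move=> lejK; apply/polyP => i; rewrite coef_take_poly !coef_poly.
by case: ifP => // ltij; rewrite ifT //; lia.
Qed.

Lemma Sfib_fib_poly m n K : (n < K)%N -> (Sfib m (n + m))%:R = (fib_poly K ^+ m)`_n.
Proof.
move=> ltnK; rewrite Sfib_coef sum_fibXn exprMn coefXnM ifF ?addnK; last by lia.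
case: m => [|m]; first by rewrite !expr0.
have trunc_eq : take_poly n.+1 (fib_poly (n + m.+1)) = take_poly n.+1 (fib_poly K).
  by rewrite !take_fib_poly //; lia.
move/polyP/(_ n): (eq_take_polyX m.+1 trunc_eq).
by rewrite !coef_take_poly ltnSn.
Qed.

Lemma fib_polyS K : fib_poly K.+1 = fib_poly K + (fib K.+1)%:R * 'X^K.
Proof. by rewrite /fib_poly !poly_def big_ord_recr scaler_nat mulr_natl. Qed.

Lemma fib_den_fib_poly K :
  fib_den * fib_poly K = 1 - ((fib K.+1)%:R + (fib K)%:R * 'X) * 'X^K.
Proof.
elim: K => [|K IH].
  by rewrite /fib_poly poly_def big_ord0 mulr0 /= mul0r addr0 expr0 mulr1 subrr.
by rewrite fib_polyS mulrDr IH /fib_den fibSS natrD !exprS; ring.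
Qed.

Lemma take_fib_den_fib_poly K : take_poly K (fib_den * fib_poly K) = take_poly K 1.
Proof. by rewrite fib_den_fib_poly raddfB /= take_polyMXn_0 subr0. Qed.

Lemma deriv_fib_den : fib_den^`() = - (1 + 'X *+ 2).
Proof. by rewrite /fib_den !derivE; ring. Qed.

Lemma take_fib_den_deriv k :
  take_poly k (fib_den * (fib_poly k.+1)^`()) =
  take_poly k ((1 + 'X *+ 2) * fib_poly k.+1).
Proof.
have := eq_take_poly_deriv (take_fib_den_fib_poly k.+1).
rewrite derivM derivC raddf0 raddfD /= deriv_fib_den mulNr raddfN /=.
by move/eqP; rewrite addrC subr_eq0 => /eqP.
Qed.

Lemma take_fib_den_derivX k m :
  take_poly k (fib_den * (fib_poly k.+1 ^+ m)^`()) =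
  take_poly k ((1 + 'X *+ 2) * fib_poly k.+1 ^+ m *+ m).
Proof.
case: m => [|m]; first by rewrite expr0 derivC mulr0 mulr0n.
rewrite deriv_exp mulrnAr !raddfMn /= mulrA (eq_take_polyM _ (take_fib_den_deriv k)).
by rewrite -mulrA -exprS.
Qed.

End FibonacciGeneratingFunction.

Section FibonacciRecurrence.
Context {F : numFieldType}.

Lemma coef_fib_den_deriv_recurrence (A : {poly F}) m n :
  (fib_den * A^`())`_n.+1 = ((1 + 'X *+ 2) * A *+ m)`_n.+1 ->
  n.+2%:R * A`_n.+2 = (n.+1%:R + m%:R) * A`_n.+1 + (n%:R + 2 * m%:R) * A`_n.
Proof.
have coefXXA' : ('X * ('X * A^`()))`_n.+1 = A`_n *+ n.
  by rewrite coefXM coefXM; case: n => [|n]; rewrite ?mulr0n ?coef_deriv.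
move=> ode.
rewrite /fib_den !mulrBl mul1r expr2 -mulrA !coefB coefXXA' coefXM in ode.
rewrite (coefMn ((1 + 'X *+ 2) * A)) mulrDl mul1r coefD mulrnAl in ode.
rewrite (coefMn ('X * A)) coefXM !coef_deriv /= in ode.
move: ode; move: (A`_n.+2) (A`_n.+1) (A`_n) => a2 a1 a0 ode.
have -> : n.+2%:R * a2 = a2 *+ n.+2 - a1 *+ n.+1 - a0 *+ n + a1 *+ n.+1 + a0 *+ n.
  by ring.
by rewrite ode; ring.
Qed.

Lemma Sfib_recurrence m : gegen_recurrence m%:R (fun n => (Sfib m (n + m))%:R : F).
Proof.
move=> n; rewrite !(Sfib_fib_poly m _ n.+3); try lia.
apply: coef_fib_den_deriv_recurrence.
move/polyP/(_ n.+1): (take_fib_den_derivX (R := F) n.+2 m).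
by rewrite !coef_take_poly ltnSn => ->.
Qed.

Lemma coef0_fib_polyX K m : (0 < K)%N -> (fib_poly K ^+ m)`_0 = 1 :> F.
Proof.
by move=> K_gt0; rewrite -horner_coef0 horner_exp horner_coef0 coef_poly K_gt0 expr1n.
Qed.

Lemma Sfib_diag m : (Sfib m m)%:R = 1 :> F.
Proof. by rewrite (Sfib_fib_poly m 0 1) // coef0_fib_polyX. Qed.

Lemma Sfib_diagS m : (Sfib m m.+1)%:R = m%:R :> F.
Proof.
rewrite (Sfib_fib_poly m 1 2) //.
move/polyP/(_ 0%N): (take_fib_den_derivX (R := F) 1 m); rewrite !coef_take_poly /=.
rewrite !coef0M coefMn coef0M coef_deriv coef0_fib_polyX //.
by rewrite /fib_den !coefE /= !subr0 mul1r mulr1n mul0rn addr0 mulr1 => ->.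
Qed.

End FibonacciRecurrence.

Definition gegenbauer_rot (l : algC) (n : nat) : algC :=
  (- 'i) ^+ n * gegenbauer n l ('i / 2%:R).

Lemma mul2_idiv2 : 2 * ('i / 2%:R) = 'i :> algC.
Proof. by rewrite mulrC divfK ?pnatr_eq0. Qed.

Lemma gegen_pairS l x k : gegen_pair l x k.+1 =
  ((gegen_pair l x k).2,
   (2 * x * (k.+1%:R + l) * (gegen_pair l x k).2 - (k%:R + 2 * l) * (gegen_pair l x k).1)
     / k.+2%:R).
Proof. by rewrite /=; case: (gegen_pair l x k). Qed.

Lemma gegenbauer_rot_recurrence l : gegen_recurrence l (gegenbauer_rot l).
Proof.
move=> n; rewrite /gegenbauer_rot /gegenbauer !gegen_pairS /=.
set a := (gegen_pair _ _ n).1; set b := (gegen_pair _ _ n).2.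
have exprSS_Ni : (- 'i) ^+ n.+2 = - (- 'i) ^+ n :> algC.
  by rewrite exprSr exprSr -mulrA -expr2 sqrrN sqrCi mulrN1.
rewrite exprSS_Ni exprSr -mulrA mul2_idiv2.
by field; rewrite -natrD pnatr_eq0.
Qed.

Lemma gegenbauer_rot0 l : gegenbauer_rot l 0 = 1.
Proof. by rewrite /gegenbauer_rot expr0 mul1r. Qed.

Lemma gegenbauer_rot1 l : gegenbauer_rot l 1 = l.
Proof.
rewrite /gegenbauer_rot /gegenbauer gegen_pairS /= expr1 mulrAC mul2_idiv2.
by rewrite mulrA mulNr -expr2 sqrCi opprK mul1r.
Qed.

Section ClosedForm.
Variable M : algC.

Definition gegen_term (n r : nat) : algC :=
  if (2 * r <= n)%N then
    rising (2 * M) n / 2%:R ^+ n *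
    ((5%:R / 4%:R) ^+ r / ((r`!)%:R * rising (M + 2%:R^-1) r * ((n - 2 * r)`!)%:R))
  else 0.

Definition gegen_series (n : nat) : algC :=
  rising (2 * M) n / 2%:R ^+ n *
  \sum_(r < (n./2).+1)
     (5%:R / 4%:R) ^+ r /
     ((r`!)%:R * rising (M + 2%:R^-1) r * ((n - 2 * r)`!)%:R).

Lemma natr_fact_neq0 k : (k`!)%:R != 0 :> algC.
Proof. by rewrite pnatr_eq0 -lt0n fact_gt0. Qed.

Lemma risingS a n : rising a n.+1 = rising a n * (a + n%:R).
Proof. by rewrite /rising big_ord_recr. Qed.

Lemma gegen_termE k r : gegen_term (2 * r + k) r =
  rising (2 * M) (2 * r + k) / 2%:R ^+ (2 * r + k) *
  ((5%:R / 4%:R) ^+ r / ((r`!)%:R * rising (M + 2%:R^-1) r)) / (k`!)%:R.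
Proof. by rewrite /gegen_term leq_addr addKn invfM mulrA !mulrA. Qed.

Lemma gegen_term_eq0 {n r} : (n < 2 * r)%N -> gegen_term n r = 0.
Proof. by rewrite /gegen_term ltnNge => /negPf ->. Qed.

Lemma gegen_termSn n r :
  (n.+1 - 2 * r)%:R * gegen_term n.+1 r = (2 * M + n%:R) / 2 * gegen_term n r.
Proof.
have [le2rn | ltn2r] := leqP (2 * r) n; last first.
  rewrite (gegen_term_eq0 ltn2r) mulr0.
  have [lt2r|le2r] := ltnP n.+1 (2 * r); first by rewrite gegen_term_eq0 ?mulr0.
  by rewrite (_ : n.+1 - 2 * r = 0)%N ?mul0r //; lia.
have [k ->] : exists k, n = (2 * r + k)%N by exists (n - 2 * r)%N; lia.
rewrite -addnS !gegen_termE addKn addnS risingS exprS factS natrM.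
set C := _ ^+ r / _.
by field; rewrite natr_fact_neq0 nat1r expf_eq0 !pnatr_eq0 andbF.
Qed.

Lemma gegen_series0 : gegen_series 0 = 1.
Proof. by rewrite /gegen_series big_ord1 /rising !big_ord0 !expr0 !divr1 !mul1r invr1. Qed.

Lemma gegen_series1 : gegen_series 1 = M.
Proof.
rewrite /gegen_series big_ord1 /rising big_ord1 !big_ord0 expr0 expr1 /=.
by rewrite muln0 subn0 (factS 0) fact0; field.
Qed.

Hypothesis M_ge0 : 0 <= M.

Lemma half_shift_gt0 j : 0 < M + 2%:R^-1 + j%:R.
Proof.
rewrite -addrA; apply: ltr_wpDl M_ge0 _.
by rewrite ltr_wpDr ?ler0n ?invr_gt0 ?ltr0n.
Qed.

Lemma rising_half_neq0 r : rising (M + 2%:R^-1) r != 0.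
Proof. by apply/prodf_neq0 => j _; rewrite gt_eqF ?half_shift_gt0. Qed.

Lemma gegen_termSr n r :
  r.+1%:R * (M + 2%:R^-1 + r%:R) * gegen_term n r.+1 =
  5%:R / 4%:R * ((n - 2 * r).-1%:R * (n - 2 * r)%:R) * gegen_term n r.
Proof.
have [le2rn | ltn2r] := leqP (2 * r.+1) n; last first.
  rewrite (gegen_term_eq0 ltn2r) mulr0.
  have [le2r|lt2r] := leqP (2 * r) n; last by rewrite (gegen_term_eq0 lt2r) mulr0.
  by rewrite -natrM (_ : (n - 2 * r).-1 * (n - 2 * r) = 0)%N ?mulr0 ?mul0r //; lia.
have [k ->] : exists k, n = (2 * r.+1 + k)%N by exists (n - 2 * r.+1)%N; lia.
rewrite gegen_termE (_ : 2 * r.+1 + k = 2 * r + k.+2)%N; last by lia.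
rewrite gegen_termE addKn /= risingS !exprS !factS !natrM.
have := half_shift_gt0 r; rewrite lt0r => /andP[S_neq0 _].
have E_neq0 := rising_half_neq0 r.
set C := rising _ _ / _; set E := rising _ r; set Q := _ ^+ r; set S := M + _ + _.
field.
by rewrite E_neq0 S_neq0 ?natr_fact_neq0 ?nat1r -?natrD ?pnatr_eq0.
Qed.

Definition gegen_cert (n r : nat) : algC :=
  - (2 * r%:R * (2 * M + 2 * r%:R - 1)) / (n%:R + 2 * M + 1) * gegen_term n.+2 r.

Lemma natr_predM k : k.-1%:R * k%:R = (k%:R - 1) * k%:R :> algC.
Proof. by case: k => [|k]; rewrite ?mulr0 // -natr1 addrK. Qed.

Lemma gegen_term_telescope n r :
  n.+2%:R * gegen_term n.+2 r - (n.+1%:R + M) * gegen_term n.+1 r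
    - (n%:R + 2 * M) * gegen_term n r = gegen_cert n r.+1 - gegen_cert n r.
Proof.
have [lt2r|le2r] := ltnP n.+2 (2 * r).
  by rewrite /gegen_cert !gegen_term_eq0 ?mulr0 ?subrr //; lia.
have [j Ej] : exists j, n.+2 = (2 * r + j)%N by exists (n.+2 - 2 * r)%N; lia.
have jE : j%:R = n.+2%:R - 2 * r%:R :> algC by rewrite Ej natrD natrM addrAC subrr add0r.
have D_neq0 : n%:R + 2 * M + 1 != 0.
  by rewrite gt_eqF // -addrA ltr_wpDl ?ler0n // ltr_wpDl ?mulr_ge0 ?ler0n ?ltr01.
have t2_step := gegen_termSr n.+2 r.
have t1_step := gegen_termSn n.+1 r; have t0_step := gegen_termSn n r.
rewrite (_ : n.+2 - 2 * r = j)%N in t1_step t2_step; last by lia.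
rewrite (_ : n.+1 - 2 * r = j.-1)%N in t0_step; last by lia.
rewrite (_ : 2 * M + n.+1%:R = n%:R + 2 * M + 1) in t1_step; last by ring.
have certSE : gegen_cert n r.+1 = - 4%:R / (n%:R + 2 * M + 1) *
    (r.+1%:R * (M + 2%:R^-1 + r%:R) * gegen_term n.+2 r.+1).
  by rewrite /gegen_cert; move: (gegen_term _ _) => t2; field.
rewrite certSE /gegen_cert t2_step.
move: (gegen_term n.+2 r) (gegen_term n.+1 r) (gegen_term n r) t1_step t0_step.
move=> T t1 t0 t1_step t0_step.
have t1E : t1 = 2%:R / (n%:R + 2 * M + 1) * (j%:R * T) by rewrite t1_step; field.
have t0E : (n%:R + 2 * M) * t0 = 4%:R / (n%:R + 2 * M + 1) * (j.-1%:R * j%:R * T).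
  rewrite (_ : _ * t0 = 2%:R * ((2 * M + n%:R) / 2 * t0)); last by field.
  by rewrite -t0_step t1E; field.
by rewrite t0E t1E natr_predM jE; field.
Qed.

Lemma gegen_series_sum n K : (n./2 < K)%N -> gegen_series n = \sum_(r < K) gegen_term n r.
Proof.
move=> ltnK; rewrite /gegen_series mulr_sumr.
rewrite (eq_bigr (fun r : 'I_(n./2).+1 => gegen_term n r)); last first.
  move=> r _; rewrite /gegen_term ifT //.
  by have := ltn_ord r; move: (nat_of_ord r) => k; rewrite -divn2; lia.
rewrite (big_ord_widen K (gegen_term n) ltnK) big_mkcond /=; apply: eq_bigr => r _.
case: ifP => // /negbT; rewrite -leqNgt => le_r.
by rewrite gegen_term_eq0 //; move: le_r; rewrite -divn2; lia.
Qed.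

Lemma gegen_series_recurrence : gegen_recurrence M gegen_series.
Proof.
move=> n.
rewrite !(gegen_series_sum _ n.+3); try by rewrite -divn2; lia.
apply/eqP; rewrite -subr_eq0 !mulr_sumr opprD addrA -!sumrB.
rewrite (eq_bigr (fun r : 'I_n.+3 => gegen_cert n r.+1 - gegen_cert n r)); last first.
  by move=> r _; rewrite gegen_term_telescope.
rewrite -(big_mkord xpredT (fun r => gegen_cert n r.+1 - gegen_cert n r)) telescope_sumr //.
rewrite /gegen_cert (gegen_term_eq0 (_ : n.+2 < 2 * n.+3)%N) ?mulr0; last by lia.
by rewrite !(mul0r, oppr0, subr0).
Qed.

End ClosedForm.

Theorem mainTheorem7 (m n : nat) (hm : (1 <= m)%N) :
  (Sfib m (n + m))%:R = (- 'i) ^+ n * gegenbauer n m%:R ('i / 2%:R) /\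
  (- 'i) ^+ n * gegenbauer n m%:R ('i / 2%:R) =
    rising (2 * m%:R) n / 2%:R ^+ n *
    \sum_(r < (n./2).+1)
       (5%:R / 4%:R) ^+ r /
       ((r`!)%:R * rising (m%:R + 2%:R^-1) r * ((n - 2 * r)`!)%:R).
Proof.
split.
  apply: (eq_gegen_recurrence (Sfib_recurrence m) (gegenbauer_rot_recurrence _)).
    by rewrite /= Sfib_diag gegenbauer_rot0.
  by rewrite /= Sfib_diagS gegenbauer_rot1.
apply: (eq_gegen_recurrence (gegenbauer_rot_recurrence _)
                            (gegen_series_recurrence _ (ler0n _ m))).
  by rewrite gegenbauer_rot0 gegen_series0.
by rewrite gegenbauer_rot1 gegen_series1.
Qed.
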